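(* Let $T$ be a finite rooted tree with root $v_0$ and leaves identified with classes $1,\dots,K$; identify each non-root node $v_j$ with the set of classes in its subtree, and let $a(y)$ be the set of non-root nodes on the path from leaf $y$ to the root (including the leaf). For a probability vector $f=(f_1,\dots,f_K)$ and label $y$, define the unweighted loss $$\mathcal L(f,y)=-\sum_{v_j\in a(y)}\log\Big(\sum_{k\in v_j} f_k\Big).$$ Then $\mathcal L$ is not, in general, a proper scoring rule: there exist trees $T$ and probability vectors $\pi$ such that $f=\pi$ does not minimize $\sum_{k=1}^K\pi_k\,\mathcal L(f,k)$ over the probability simplex.
   Context: Proper scoring rule: a loss $\mathcal L(f,y)$ on probability vectors over $K$ classes is proper if, for every distribution $\pi$ of the label, the expected loss $\sum_k \pi_k\mathcal L(f,k)$ is minimized over the simplex at $f=\pi$. *)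

From HB Require Import structures.
From mathcomp Require Import all_boot all_order all_algebra.
From mathcomp Require Import all_classical all_reals all_analysis.
Set Implicit Arguments. Unset Strict Implicit. Unset Printing Implicit Defensive.
Import Order.TTheory GRing.Theory Num.Theory.
Local Open Scope ring_scope.

(* Nodes form a finite type; every node has a parent (root is its own parent),
   every node reaches the root by iterating parent (so the structure is a tree),
   and the leaves (nodes without children) are exactly the images of the
   injective labelling [leaf]. *)
Record hier_tree (K : nat) := HierTree {
  node : finType;
  root : node;
  parent : node -> node;
  parent_root : parent root = root;
  reach_root : forall v, exists n, iter n parent v = root;
  leaf : 'I_K -> node;
  leaf_inj : injective leaf;
  leaf_not_root : forall y, leaf y != root;
  leaf_spec : forall v, v != root ->
     ((forall w, w != root -> parent w != v) <-> exists y, leaf y = v)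
}.

Section Loss.
Variables (R : realType) (K : nat) (T : hier_tree K).

Definition anc (v w : node T) : bool :=
  [exists n : 'I_(#|node T|).+1, iter n (@parent _ T) w == v].

Definition cls (v : node T) : {set 'I_K} := [set y | anc v (leaf T y)].

Definition apath (y : 'I_K) : {set node T} :=
  [set v | anc v (leaf T y) && (v != root T)].

Definition mass (f : 'I_K -> R) (v : node T) : R := \sum_(k in cls v) f k.

(* -log of the mass, +oo when the mass is 0 (log 0 = -oo). *)
Definition nlog (x : R) : \bar R := if 0 < x then (- ln x)%:E else +oo%E.

Definition hloss (f : 'I_K -> R) (y : 'I_K) : \bar R :=
  (\sum_(v in apath y) nlog (mass f v))%E.

End Loss.

Definition simplex (R : realType) (K : nat) (f : 'I_K -> R) : Prop :=
  (forall k, 0 <= f k) /\ \sum_(k < K) f k = 1.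

Definition expected_loss (R : realType) (K : nat)
  (L : ('I_K -> R) -> 'I_K -> \bar R) (pi f : 'I_K -> R) : \bar R :=
  (\sum_(k < K) (pi k)%:E * L f k)%E.

Definition proper_scoring (R : realType) (K : nat)
  (L : ('I_K -> R) -> 'I_K -> \bar R) : Prop :=
  forall pi, simplex pi -> forall f, simplex f ->
    (expected_loss L pi pi <= expected_loss L pi f)%E.

(** In the tree where class 0 hangs directly below the root while class 1
    sits below an extra unary node, the loss of class 1 counts [-log f_1]
    twice.  For the uniform label distribution the expected loss is therefore
    [-(1/2) log f_0 - log f_1], which is minimised at [f = (1/3, 2/3)], not at
    the uniform [f]; comparing the two values amounts to [3^3 < 2^5]. *)

From HB Require Import structures.
From mathcomp Require Import all_boot all_order all_algebra.
From mathcomp Require Import all_classical all_reals all_analysis.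
From mathcomp Require Import lra.
Set Implicit Arguments. Unset Strict Implicit. Unset Printing Implicit Defensive.
Import Order.TTheory GRing.Theory Num.Theory.
Local Open Scope ring_scope.

Definition lop_root : 'I_4 := ord0.
Definition lop_leaf0 : 'I_4 := @Ordinal 4 1 isT.
Definition lop_mid : 'I_4 := @Ordinal 4 2 isT.
Definition lop_leaf1 : 'I_4 := @Ordinal 4 3 isT.

Definition lop_parent (v : 'I_4) : 'I_4 :=
  if v == lop_leaf1 then lop_mid else lop_root.

Definition class0 : 'I_2 := ord0.
Definition class1 : 'I_2 := @Ordinal 2 1 isT.

Definition lop_leaf (y : 'I_2) : 'I_4 :=
  if y == class0 then lop_leaf0 else lop_leaf1.

Lemma lop_parent_root : lop_parent lop_root = lop_root.
Proof. by []. Qed.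

Lemma lop_parentK (v : 'I_4) : lop_parent (lop_parent v) = lop_root.
Proof. by rewrite /lop_parent; case: (v == lop_leaf1). Qed.

Lemma lop_reach_root (v : 'I_4) : exists n, iter n lop_parent v = lop_root.
Proof. by exists 2%N; rewrite /= lop_parentK. Qed.

Lemma lop_leaf_inj : injective lop_leaf.
Proof. by move=> [[|[|?]] ?] [[|[|?]] ?] //= _; apply/val_inj. Qed.

Lemma lop_leaf_neq_root (y : 'I_2) : lop_leaf y != lop_root.
Proof. by case: y => [[|[|?]] ?]. Qed.

Lemma lop_leaf_spec (v : 'I_4) : v != lop_root ->
  ((forall w, w != lop_root -> lop_parent w != v) <-> exists y, lop_leaf y = v).
Proof.
case: v => [[|[|[|[|?]]]] hv] //= _; split.
- by move=> _; exists class0; apply/val_inj.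
- by move=> _ w _; rewrite /lop_parent; case: (w == lop_leaf1).
- by move=> /(_ lop_leaf1 isT).
- by case=> [[[|[|?]] ?]] /(congr1 val).
- by move=> _; exists class1; apply/val_inj.
- by move=> _ w _; rewrite /lop_parent; case: (w == lop_leaf1).
Qed.

Definition lopsided_tree : hier_tree 2 :=
  HierTree lop_parent_root lop_reach_root lop_leaf_inj lop_leaf_neq_root
    lop_leaf_spec.

Lemma lop_ancE (v w : node lopsided_tree) : anc v w =
  [|| w == v, lop_parent w == v | lop_parent (lop_parent w) == v].
Proof.
have card_nodes : #|node lopsided_tree|.+1 = 5%N by rewrite card_ord.
apply/existsP/idP => [[[[|[|n]] _]] /= /eqP <-|].
- by rewrite eqxx.
- by rewrite eqxx orbT.
- by rewrite !lop_parentK eqxx !orbT.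
by case/or3P=> /eqP <-; [exists (inord 0) | exists (inord 1) | exists (inord 2)];
  rewrite /= inordK ?card_nodes.
Qed.

Lemma lop_apath0 : apath lopsided_tree class0 = [set lop_leaf0].
Proof. by apply/setP => -[[|[|[|[|?]]]] ?]; rewrite !inE lop_ancE. Qed.

Lemma lop_apath1 : apath lopsided_tree class1 = [set lop_mid; lop_leaf1].
Proof. by apply/setP => -[[|[|[|[|?]]]] ?]; rewrite !inE lop_ancE. Qed.

Lemma lop_cls_leaf0 : cls (lop_leaf0 : node lopsided_tree) = [set class0].
Proof. by apply/setP => -[[|[|?]] ?]; rewrite !inE lop_ancE. Qed.

Lemma lop_cls_mid : cls (lop_mid : node lopsided_tree) = [set class1].
Proof. by apply/setP => -[[|[|?]] ?]; rewrite !inE lop_ancE. Qed.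

Lemma lop_cls_leaf1 : cls (lop_leaf1 : node lopsided_tree) = [set class1].
Proof. by apply/setP => -[[|[|?]] ?]; rewrite !inE lop_ancE. Qed.

Section LopsidedLoss.
Variable R : realType.

Lemma nlogE (x : R) : 0 < x -> nlog x = (- ln x)%:E.
Proof. by rewrite /nlog => ->. Qed.

Lemma hloss_lop0 (f : 'I_2 -> R) : hloss lopsided_tree f class0 = nlog (f class0).
Proof. by rewrite /hloss lop_apath0 big_set1 /mass lop_cls_leaf0 big_set1. Qed.

Lemma hloss_lop1 (f : 'I_2 -> R) :
  hloss lopsided_tree f class1 = (nlog (f class1) + nlog (f class1))%E.
Proof.
rewrite /hloss lop_apath1 big_setU1 ?inE // big_set1.
by rewrite /mass lop_cls_mid lop_cls_leaf1 !big_set1.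
Qed.

Lemma expected_loss_lopsided (pi f : 'I_2 -> R) :
  0 < f class0 -> 0 < f class1 ->
  expected_loss (@hloss R 2 lopsided_tree) pi f =
    (- (pi class0 * ln (f class0) + pi class1 * ln (f class1) *+ 2))%:E.
Proof.
move=> f0_gt0 f1_gt0.
rewrite /expected_loss !big_ord_recl big_ord0 adde0.
have -> : lift ord0 ord0 = class1 by apply/val_inj.
rewrite -[ord0]/class0 hloss_lop0 hloss_lop1 !nlogE //.
by rewrite -EFinD; congr EFin; rewrite mulr2n; lra.
Qed.

End LopsidedLoss.

Theorem proposition2 (R : realType) :
  exists (K : nat) (T : hier_tree K), ~ proper_scoring (@hloss R K T).
Proof.
exists 2%N, lopsided_tree => proper.
pose pi : 'I_2 -> R := fun=> 2^-1.
pose f : 'I_2 -> R := fun k => if k == class0 then 3^-1 else 2 / 3.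
have simplex_pi : simplex pi.
  by split=> [k|]; rewrite ?big_ord_recl ?big_ord0 /pi; lra.
have simplex_f : simplex f.
  by split=> [[[|[|?]] ?]|]; rewrite ?big_ord_recl ?big_ord0 /f //=; lra.
have := proper pi simplex_pi f simplex_f.
rewrite !expected_loss_lopsided /pi /f //= ?invr_gt0 ?ltr0n ?divr_gt0 //.
have ln_gap : ln (3 : R) *+ 3 < ln (2 : R) *+ 5.
  by rewrite -!lnXn // ltr_ln ?posrE -?natrX ?ltr_nat ?exprn_gt0.
rewrite lee_fin !lnV ?posrE // ln_div ?posrE //.
by move: ln_gap; move: (ln (2 : R)) (ln (3 : R)) => ln2 ln3; lra.
Qed.
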